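(* Let $(X_n)_{n\in\mathbb N}$ be a stationary process which is $\Theta,r$-multiple mixing with respect to $\mathcal G$, and let $p\in\mathbb N^*$ satisfy $\sum_{i=0}^\infty i^{p-1}\Theta(i)<\infty$. Then there is a constant $K_p<\infty$ such that $$I_n(p)\le K_p\sum_{i=1}^{\lceil p/2\rceil}n^{i-1}\|f(X_0)\|_r^i\|f\|_{\mathcal G}^i$$ for all $n\in\mathbb N^*$ and all $f\in\mathcal G$ with $\|f\|_\infty\le1$ and ${\rm E}f(X_0)=0$.
   Context: For integers $i_1,\dots,i_j$ write $i_j^*=i_1+\dots+i_j$. For fixed $f$ and $p\in\mathbb N^*$, $I_n(p)=\sum_{0\le i_1,\dots,i_p\le n-1,\ i_p^*\le n-1}\big|{\rm E}\big(f(X_0)f(X_{i_1^*})\cdots f(X_{i_p^*})\big)\big|$. $\mathcal G$ is a class of measurable real functions on $\mathbb R^d$ with a seminorm $\|\cdot\|_{\mathcal G}$; $\|\cdot\|_r$ is the $L^r$ norm. Multiple mixing: $(X_i)$ is $\Theta,r$-multiple mixing with respect to $\mathcal G$ if $r\in[1,\infty)$, $\Theta:\mathbb N\to\mathbb R_0^+$ is nonincreasing, and for every $p\in\mathbb N^*$ there is $K_p<\infty$ such that $\big|{\rm Cov}\big(f(X_0)f(X_{i_1^*})\cdots f(X_{i_{q-1}^*}),\,f(X_{i_q^*})\cdots f(X_{i_p^*})\big)\big|\le K_p\|f(X_0)\|_r\|f\|_{\mathcal G}\Theta(i_q)$ for all $f\in\mathcal G$ with $\|f\|_\infty\le1$ and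 ${\rm E}f(X_0)=0$, all $i_1,\dots,i_p\in\mathbb N$, $q\in\{1,\dots,p\}$. *)

From HB Require Import structures.
From mathcomp Require Import all_boot all_order all_algebra.
From mathcomp Require Import all_classical all_reals all_analysis.
Set Implicit Arguments. Unset Strict Implicit. Unset Printing Implicit Defensive.
Import Order.TTheory GRing.Theory Num.Theory.
Local Open Scope classical_set_scope.
Local Open Scope ring_scope.

Section defs.
Context {dT : measure_display} {T : measurableType dT} {R : realType}.
(* state space R^d, realised as d.-tuple R with the product (Borel) sigma-algebra *)
Context {d : nat}.
Local Notation S := (d.-tuple R).

Definition Ex (P : probability T R) (F : T -> R) : R := fine ('E_P[F])%E.

Definition Cov (P : probability T R) (F1 F2 : T -> R) : R :=
  fine (covariance P F1 F2).

Definition Lrnorm (P : probability T R) (r : R) (F : T -> R) : R :=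
  fine ('N[P]_(r%:E)[EFin \o F])%E.

Definition is_process (X : nat -> T -> S) : Prop :=
  forall n, measurable_fun [set: T] (X n).

(* strict stationarity: all finite-dimensional distributions are shift invariant
   (stated on measurable rectangles, which generate the product sigma-algebra) *)
Definition stationary (P : probability T R) (X : nat -> T -> S) : Prop :=
  forall (m k : nat) (t : 'I_m -> nat) (A : 'I_m -> set S),
    (forall j, measurable (A j)) ->
    P (\bigcap_(j in [set: 'I_m]) (X (t j) @^-1` A j)) =
    P (\bigcap_(j in [set: 'I_m]) (X (t j + k)%N @^-1` A j)).

(* partial sums: psum i j = i_1 + ... + i_j  (= i_j^* ), where i_(k+1) := i k *)
Definition psum (i : nat -> nat) (j : nat) : nat := (\sum_(k < j) i k)%N.

Definition prodX (f : S -> R) (X : nat -> T -> S) (s : nat -> nat) (a b : nat)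
  : T -> R := fun w => \prod_(a <= j < b) f (X (s j) w).

Definition multiple_mixing (P : probability T R) (X : nat -> T -> S)
  (G : set (S -> R)) (normG : (S -> R) -> R) (Theta : nat -> R) (r : R) : Prop :=
  [/\ 1 <= r,
      (forall n, 0 <= Theta n),
      (forall m n, (m <= n)%N -> Theta n <= Theta m) &
      forall p : nat, (0 < p)%N ->
        exists K : R, forall f : S -> R, G f -> (forall x, `|f x| <= 1) ->
          Ex P (f \o X 0%N) = 0 ->
          forall (i : nat -> nat) (q : nat), (1 <= q <= p)%N ->
            `|Cov P (prodX f X (psum i) 0 q) (prodX f X (psum i) q p.+1)|
              <= K * Lrnorm P r (f \o X 0%N) * normG f * Theta (i q.-1)].

(* I_n(p) = sum over 0 <= i_1..i_p <= n-1 with i_p^* <= n-1 of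
   |E(f(X_0) f(X_(i_1^* )) ... f(X_(i_p^* )))| ; here i_(k+1) := i k *)
Definition In_p (P : probability T R) (X : nat -> T -> S) (f : S -> R) (n p : nat) : R :=
  \sum_(i : {ffun 'I_p -> 'I_n} | (\sum_(k < p) (i k : nat) <= n.-1)%N)
     `|Ex P (prodX f X (fun j => \sum_(k < p | (k < j)%N) (i k : nat))%N 0 p.+1)|.

End defs.

(* For a sequence of gaps s = (i_1, ..., i_q) write E(s) for the summand
   |E f(X_0) f(X_(i_1^* )) ... f(X_(i_q^* ))| of I_n(q), and bound I_n(q) by the
   sum I_q of E(s) over all of [0, n)^q.  Cutting the product after the largest
   gap i_k = max s, multiple mixing bounds the covariance of the two pieces by
   K L N Theta(max s), with L = ||f(X_0)||_r and N = ||f||_G, and stationarity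
   identifies the expectation of the second piece with E(i_(k+1), ..., i_q):
     E(s) <= K L N Theta(max s) + E(i_1, ..., i_(k-1)) E(i_(k+1), ..., i_q).
   At most q (m+1)^(q-1) tuples have maximum m, so summing over s and using
   the summability of i^(p-1) Theta(i) gives
     I_q <= C L N + n sum_(k < q) I_k I_(q-1-k).
   As I_0 = |E f(X_0)| = 0 and n g_a g_b <= (a+b+1)^2 g_(a+b+1) for the bounds
   g_a = sum_(1 <= i <= ceil(a/2)) n^(i-1) (L N)^i, induction on q concludes.
   Stationarity is only assumed on rectangles; it is first extended to products
   of bounded measurable functions by approximating them with simple functions. *)

From HB Require Import structures.
From mathcomp Require Import all_boot all_order all_algebra.
From mathcomp Require Import all_classical all_reals all_analysis.
From mathcomp Require Import ring lra zify.
Import Order.TTheory GRing.Theory Num.Theory.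
Import archimedean.Num.Theory archimedean.Num.Def.
Set Implicit Arguments. Unset Strict Implicit. Unset Printing Implicit Defensive.
Local Open Scope classical_set_scope.
Local Open Scope ring_scope.

Section bounded_measurable.
Context {dT : measure_display} {T : measurableType dT} {R : realType}.

Definition bounded_measurable (F : T -> R) :=
  measurable_fun setT F /\ exists M : R, forall w, `|F w| <= M.

Lemma bounded_measurable_cst c : bounded_measurable (cst c).
Proof. by split; [exact: measurable_cst | exists `|c|]. Qed.

Lemma bounded_measurableD F G :
  bounded_measurable F -> bounded_measurable G -> bounded_measurable (F \+ G).
Proof.
move=> [mF [M hM]] [mG [N hN]].
split; first exact: measurable_realfun.measurable_funD.
by exists (M + N) => w /=; rewrite (le_trans (ler_normD _ _)) // lerD.
Qed.

Lemma bounded_measurableB F G :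
  bounded_measurable F -> bounded_measurable G -> bounded_measurable (F \- G).
Proof.
move=> [mF [M hM]] [mG [N hN]].
split; first exact: measurable_realfun.measurable_funB.
by exists (M + N) => w /=; rewrite (le_trans (ler_normB _ _)) // lerD.
Qed.

Lemma bounded_measurableM F G : bounded_measurable F -> bounded_measurable G ->
  bounded_measurable (fun w => F w * G w).
Proof.
move=> [mF [M hM]] [mG [N hN]].
split; first exact: measurable_realfun.measurable_funM.
by exists (M * N) => w /=; rewrite normrM ler_pM.
Qed.

Lemma bounded_measurable_indic A : measurable A -> bounded_measurable (\1_A).
Proof.
move=> mA; split; first exact: measurable_realfun.measurable_indic.
by exists 1 => w; rewrite /indic; case: (w \in A); rewrite ?normr1 ?normr0.
Qed.

Lemma bounded_measurable_sum (I : Type) (s : seq I) (F : I -> T -> R) :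
  (forall i, bounded_measurable (F i)) ->
  bounded_measurable (fun w => \sum_(i <- s) F i w).
Proof.
move=> h; elim: s => [|x s IH].
  by under eq_fun do rewrite big_nil; exact: bounded_measurable_cst.
by under eq_fun do rewrite big_cons; exact: bounded_measurableD.
Qed.

Lemma bounded_measurable_prod (I : Type) (s : seq I) (F : I -> T -> R) :
  (forall i, bounded_measurable (F i)) ->
  bounded_measurable (fun w => \prod_(i <- s) F i w).
Proof.
move=> h; elim: s => [|x s IH].
  by under eq_fun do rewrite big_nil; exact: bounded_measurable_cst.
by under eq_fun do rewrite big_cons; exact: bounded_measurableM.
Qed.

Lemma prod_indic m (A : 'I_m -> set T) w :
  \prod_(j < m) (\1_(A j) w : R) = \1_(\bigcap_(j in [set: 'I_m]) A j) w.
Proof.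
have [allA|] := pselect (forall j, A j w).
  by rewrite big1 ?indicE ?mem_set // => j _; rewrite indicE mem_set.
move=> /existsNP[j Ajw]; rewrite (bigD1 j) //= !indicE memNset // mul0r memNset //.
by move=> /(_ j I).
Qed.

Lemma bigcap_ord_measurable m (A : 'I_m -> set T) :
  (forall j, measurable (A j)) -> measurable (\bigcap_(j in [set: 'I_m]) A j).
Proof.
move=> mA; have -> : [set: 'I_m] = [set` enum 'I_m].
  by apply/seteqP; split => j //= _; rewrite mem_enum.
by rewrite bigcap_seq; exact: bigsetI_measurable.
Qed.

End bounded_measurable.

Section bounded_expectation.
Context {dT : measure_display} {T : measurableType dT} {R : realType}.
Variable P : probability T R.

Lemma bounded_measurable_Lfun1 F : bounded_measurable F -> F \in Lfun P 1.
Proof.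
move=> [mF [M hM]]; apply/Lfun1_integrable.
apply: measurable_bounded_integrable => //.
  exact: le_lt_trans (probability_le1 P measurableT) (ltry 1).
exists M; split; first exact: num_real.
by move=> y My x _ /=; apply: le_trans (hM x) (ltW My).
Qed.

Lemma expectation_fin_num F : bounded_measurable F -> ('E_P[F] \is a fin_num)%E.
Proof. by move/bounded_measurable_Lfun1; exact: expectation_fin_num. Qed.

Lemma ExD F G : bounded_measurable F -> bounded_measurable G ->
  Ex P (F \+ G) = Ex P F + Ex P G.
Proof.
move=> hF hG; rewrite /Ex expectationD ?bounded_measurable_Lfun1 //.
by rewrite fineD // expectation_fin_num.
Qed.

Lemma ExB F G : bounded_measurable F -> bounded_measurable G ->
  Ex P (F \- G) = Ex P F - Ex P G.
Proof.
move=> hF hG; rewrite /Ex expectationB ?bounded_measurable_Lfun1 //.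
by rewrite fineB // expectation_fin_num.
Qed.

Lemma ExZl F k : bounded_measurable F -> Ex P (fun w => k * F w) = k * Ex P F.
Proof.
move=> hF; have -> : (fun w => k * F w) = k \o* F.
  by apply/funext => w /=; rewrite mulrC.
rewrite /Ex expectationZl ?bounded_measurable_Lfun1 //=.
by rewrite fineM // expectation_fin_num.
Qed.

Lemma Ex_cst c : Ex P (cst c) = c.
Proof. by rewrite /Ex expectation_cst. Qed.

Lemma Ex_ge0 F : (forall w, 0 <= F w) -> 0 <= Ex P F.
Proof. by move=> F0; rewrite /Ex fine_ge0 // expectation_ge0. Qed.

Lemma Ex_indic A : measurable A -> Ex P (\1_A) = fine (P A).
Proof. by move=> mA; rewrite /Ex expectation_indic. Qed.

Lemma Ex_sum (I : Type) (s : seq I) (F : I -> T -> R) :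
  (forall i, bounded_measurable (F i)) ->
  Ex P (fun w => \sum_(i <- s) F i w) = \sum_(i <- s) Ex P (F i).
Proof.
move=> h; elim: s => [|x s IH].
  by under eq_fun do rewrite big_nil; rewrite big_nil Ex_cst.
under eq_fun do rewrite big_cons; rewrite big_cons -IH.
exact: ExD (h x) (bounded_measurable_sum s h).
Qed.

Lemma Ex_norm_le F c : bounded_measurable F -> (forall w, `|F w| <= c) ->
  `|Ex P F| <= c.
Proof.
move=> hF Fc; have hc := bounded_measurable_cst c.
have Fw w : - c <= F w <= c by rewrite -ler_norml.
rewrite ler_norml; apply/andP; split.
- rewrite -subr_ge0 opprK addrC -(Ex_cst c) -ExD //.
  by apply: Ex_ge0 => w /=; have /andP[Fl _] := Fw w; lra.
- rewrite -subr_ge0 -(Ex_cst c) -ExB //.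
  by apply: Ex_ge0 => w /=; have /andP[_ Fr] := Fw w; lra.
Qed.

Lemma CovE F G : bounded_measurable F -> bounded_measurable G ->
  Cov P F G = Ex P (fun w => F w * G w) - Ex P F * Ex P G.
Proof.
move=> hF hG; have hFG := bounded_measurableM hF hG.
rewrite /Cov covarianceE ?bounded_measurable_Lfun1 //.
by rewrite fineB ?fin_numM ?expectation_fin_num // fineM ?expectation_fin_num.
Qed.

End bounded_expectation.

Section products_of_contractions.
Context {R : realType} {I : Type}.

Lemma prod_norm_le1 (r : seq I) (a : I -> R) :
  (forall j, `|a j| <= 1) -> `|\prod_(j <- r) a j| <= 1.
Proof.
move=> a1; elim: r => [|x r IH]; first by rewrite big_nil normr1.
by rewrite big_cons normrM -[leRHS](mulr1 1) ler_pM.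
Qed.

Lemma norm_prodB_le (r : seq I) (a b : I -> R) :
  (forall j, `|a j| <= 1) -> (forall j, `|b j| <= 1) ->
  `|\prod_(j <- r) a j - \prod_(j <- r) b j| <= \sum_(j <- r) `|a j - b j|.
Proof.
move=> a1 b1; elim: r => [|x r IH]; first by rewrite !big_nil subrr normr0.
rewrite !big_cons.
have -> : a x * \prod_(j <- r) a j - b x * \prod_(j <- r) b j =
    a x * (\prod_(j <- r) a j - \prod_(j <- r) b j)
    + (a x - b x) * \prod_(j <- r) b j.
  by rewrite mulrBr mulrBl addrA subrK.
rewrite (le_trans (ler_normD _ _)) // addrC normrM normrM lerD //.
  by rewrite -[leRHS]mulr1 ler_pM // prod_norm_le1.
by rewrite -[leRHS]mul1r ler_pM.
Qed.

End products_of_contractions.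

Lemma norm_le_div_succ_eq0 {R : realType} (x c : R) :
  (forall N : nat, `|x| <= c / N.+1%:R) -> x = 0.
Proof.
move=> xc; apply/eqP; apply/negPn/negP => x0.
have xpos : 0 < `|x| by rewrite normr_gt0.
have := xc (truncn (c / `|x|)); rewrite ler_pdivlMr // => le_c.
have : c / `|x| < (truncn (c / `|x|)).+1%:R by exact: truncnS_gt.
by rewrite ltr_pdivrMr // mulrC ltNge le_c.
Qed.

Section stationary_products.
Context {dT : measure_display} {T : measurableType dT} {R : realType}.
Variables (P : probability T R) (d : nat) (X : nat -> T -> d.-tuple R).
Hypotheses (hX : is_process X) (hS : stationary P X).
Variable g : d.-tuple R -> R.
Hypotheses (mg : measurable_fun setT g) (g1 : forall y, `|g y| <= 1).

Lemma bounded_measurable_prodX (h : d.-tuple R -> R) u a b :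
  measurable_fun setT h -> (forall y, `|h y| <= 1) ->
  bounded_measurable (prodX h X u a b).
Proof.
move=> mh h1; apply: (bounded_measurable_prod _ (F := fun j w => h (X (u j) w))).
by move=> j; split; [exact: measurableT_comp (hX _) | exists 1].
Qed.

(* [gN] is the simple function rounding [g] down to the grid of mesh
   [1/(N+1)]: a combination of indicators of measurable level sets, so
   stationarity on rectangles applies to products of [gN]. *)
Section quantization.
Variable N : nat.
Let NN : R := N.+1%:R.
Let h (y : d.-tuple R) : R := (g y + 1) * NN.
Let M := (2 * N.+1).+1.
Let v (l : nat) : R := l%:R / NN - 1.
Let B (l : nat) : set (d.-tuple R) := h @^-1` `[l%:R, l.+1%:R[.
Let gN y : R := \sum_(l < M) v l * \1_(B l) y.

Let NN_gt0 : 0 < NN. Proof. by rewrite ltr0n. Qed.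

Let g_itv y : -1 <= g y <= 1. Proof. by rewrite -ler_norml. Qed.

Let mh : measurable_fun setT h.
Proof.
apply: measurable_realfun.measurable_funM; last exact: measurable_cst.
by apply: measurable_realfun.measurable_funD => //; exact: measurable_cst.
Qed.

Let mB l : measurable (B l).
Proof. by rewrite -[B l]setTI; apply: mh => //; exact: measurable_itv. Qed.

Let h_ge0 y : 0 <= h y.
Proof. by have /andP[gl _] := g_itv y; have := NN_gt0; rewrite /h; nra. Qed.

Let h_itv y : (truncn (h y))%:R <= h y < (truncn (h y)).+1%:R.
Proof. exact/truncn_itv/h_ge0. Qed.

Let gNE y : gN y = v (truncn (h y)).
Proof.
have ltM : (truncn (h y) < M)%N.
  rewrite ltnS truncn_le_nat /h -addn1 natrD natrM.
  by have /andP[_ gy1] := g_itv y; have := NN_gt0; nra.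
rewrite /gN (bigD1 (Ordinal ltM)) //= big1 ?addr0.
  by rewrite indicE mem_set ?mulr1 // /B /= in_itv /= h_itv.
move=> l /eqP nl; rewrite indicE memNset ?mulr0 // /B /= in_itv /= => hl.
by apply: nl; apply/val_inj/esym/eqP; rewrite /= truncn_eq ?h_ge0.
Qed.

Let gN_approx y : `|g y - gN y| <= NN^-1.
Proof.
rewrite gNE; have /andP[t1 t2] := h_itv y; set t := truncn (h y) in t1 t2 *.
have -> : g y - v t = (h y - t%:R) / NN by rewrite /h /v; field; rewrite gt_eqF.
rewrite normrM !ger0_norm ?subr_ge0 ?invr_ge0 ?(ltW NN_gt0) //.
rewrite -[leRHS]mul1r ler_pM2r ?invr_gt0 //.
by rewrite -addn1 natrD in t2; lra.
Qed.

Let gN1 y : `|gN y| <= 1.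
Proof.
rewrite gNE; have /andP[t1 _] := h_itv y; set t := truncn (h y) in t1 *.
have /andP[gl gu] := g_itv y.
rewrite ler_norml /v; apply/andP; split.
  by rewrite lerBrDr addNr divr_ge0 // ltW.
rewrite lerBlDr ler_pdivrMr //.
have : h y <= 2 * NN by rewrite /h; have := NN_gt0; nra.
lra.
Qed.

Let mgN : measurable_fun setT gN.
Proof.
apply: measurable_sum => l; apply: measurable_realfun.measurable_funM.
  exact: measurable_cst.
exact: measurable_realfun.measurable_indic.
Qed.

Let Ex_prod_gNE m (u : nat -> nat) :
  Ex P (prodX gN X u 0 m) =
  \sum_(phi : {ffun 'I_m -> 'I_M}) (\prod_(j < m) v (phi j)) *
     fine (P (\bigcap_(j in [set: 'I_m]) (X (u j) @^-1` B (phi j)))).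
Proof.
pose C (phi : {ffun 'I_m -> 'I_M}) :=
  \bigcap_(j in [set: 'I_m]) (X (u j) @^-1` B (phi j)).
have mC phi : measurable (C phi).
  by apply: bigcap_ord_measurable => j; rewrite -[_ @^-1` _]setTI; exact: hX.
have -> : prodX gN X u 0 m =
    (fun w => \sum_(phi : {ffun 'I_m -> 'I_M})
                (\prod_(j < m) v (phi j)) * \1_(C phi) w).
  apply/funext => w; rewrite /prodX big_mkord /gN bigA_distr_bigA.
  by apply: eq_bigr => phi _; rewrite big_split /= -prod_indic.
rewrite Ex_sum => [|phi]; last first.
  exact: bounded_measurableM (bounded_measurable_cst _)
                             (bounded_measurable_indic (mC phi)).
by apply: eq_bigr => phi _; rewrite ExZl ?Ex_indic //; exact: bounded_measurable_indic.
Qed.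

Let Ex_prod_gN_shift m (t : nat -> nat) k :
  Ex P (prodX gN X (fun j => t j + k)%N 0 m) = Ex P (prodX gN X t 0 m).
Proof.
rewrite !Ex_prod_gNE; apply: eq_bigr => phi _.
by rewrite -(@hS m k (fun j => t j) (fun j => B (phi j))).
Qed.

Let Ex_prod_gN_approx m (u : nat -> nat) :
  `|Ex P (prodX g X u 0 m) - Ex P (prodX gN X u 0 m)| <= m%:R / NN.
Proof.
rewrite -ExB; try exact: bounded_measurable_prodX.
apply: Ex_norm_le => [|w].
  by apply: bounded_measurableB; exact: bounded_measurable_prodX.
rewrite /prodX /=; apply: le_trans (norm_prodB_le _ _ _) _ => //.
apply: le_trans (ler_sum _ (fun j _ => gN_approx (X (u j) w))) _.
by rewrite sumr_const_nat subn0 mulr_natl.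
Qed.

Lemma Ex_prod_shift_approx m (t : nat -> nat) k :
  `|Ex P (prodX g X (fun j => t j + k)%N 0 m) - Ex P (prodX g X t 0 m)|
    <= (2 * m)%:R / N.+1%:R.
Proof.
have shifted := Ex_prod_gN_approx m (fun j => t j + k)%N.
rewrite Ex_prod_gN_shift in shifted.
have unshifted := Ex_prod_gN_approx m t.
set a := Ex P _ in shifted *; set b := Ex P _ in unshifted *.
set c := Ex P _ in shifted unshifted.
have -> : a - b = (a - c) - (b - c) by rewrite opprB addrA subrK.
rewrite natrM -mulrA mulr_natl mulr2n.
by rewrite (le_trans (ler_normB _ _)) // lerD.
Qed.

End quantization.

Lemma Ex_prod_shift m (t : nat -> nat) k :
  Ex P (prodX g X (fun j => t j + k)%N 0 m) = Ex P (prodX g X t 0 m).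
Proof.
apply/eqP; rewrite -subr_eq0; apply/eqP.
apply: (norm_le_div_succ_eq0 (c := (2 * m)%:R)) => N.
exact: Ex_prod_shift_approx.
Qed.

End stationary_products.

Fixpoint tuples (n p : nat) : seq (seq nat) :=
  if p is p'.+1 then [seq x :: s | x <- iota 0 n, s <- tuples n p'] else [:: [::]].

Lemma mem_tuples n p s :
  (s \in tuples n p) = (size s == p) && all (fun x => x < n)%N s.
Proof.
elim: p s => [|p IH] s /=; first by rewrite inE; case: s.
apply/allpairsP/idP => [[[x t] /= [xn tp ->]]|].
  move: xn tp; rewrite /= eqSS mem_iota add0n IH => /andP[_ xn] /andP[-> ->].
  by rewrite xn.
case: s => [//|x t] /=; rewrite eqSS => /and3P[st xn tn].
by exists (x, t); rewrite /= ?mem_iota ?add0n ?IH ?st.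
Qed.

Lemma uniq_tuples n p : uniq (tuples n p).
Proof.
elim: p => [//|p IH] /=; apply: allpairs_uniq => //; first exact: iota_uniq.
by move=> [x s] [y t] _ _ /= [-> ->].
Qed.

Section tuple_sums.
Context {R : numDomainType}.

Lemma big_tuples0 n (F : seq nat -> R) : \sum_(s <- tuples n 0) F s = F [::].
Proof. exact: big_seq1. Qed.

Lemma big_tuplesS n p (F : seq nat -> R) :
  \sum_(s <- tuples n p.+1) F s = \sum_(0 <= x < n) \sum_(s <- tuples n p) F (x :: s).
Proof. by rewrite /= big_allpairs_dep /index_iota subn0. Qed.

Lemma big_tuples_cat n a b (F G : seq nat -> R) :
  \sum_(s <- tuples n (a + b)) F (take a s) * G (drop a s) =
  (\sum_(u <- tuples n a) F u) * (\sum_(v <- tuples n b) G v).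
Proof.
elim: a F => [|a IH] F.
  by rewrite add0n big_tuples0 big_distrr; apply: eq_bigr => s _; rewrite take0 drop0.
rewrite addSn !big_tuplesS big_distrl /=; apply: eq_bigr => x _.
exact: IH (fun u => F (x :: u)).
Qed.

Lemma sum_ltn_le n y : \sum_(0 <= x < n) ((x < y)%N%:R : R) <= y%:R.
Proof.
elim: n => [|n IH]; first by rewrite big_geq.
rewrite big_nat_recr //=; case: (ltnP n y) => [ny|_]; last by rewrite addr0.
have card : \sum_(0 <= x < n) ((x < y)%N%:R : R) <= n%:R.
  have -> : n%:R = \sum_(0 <= x < n) (1 : R) by rewrite sumr_const_nat subn0.
  by apply: ler_sum => x _; case: (x < y)%N.
by rewrite (le_trans (lerD card (lexx _))) // -natrD ler_nat addn1.
Qed.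

Definition max_seq (s : seq nat) : nat := foldr maxn 0%N s.

Lemma max_seq_cons x s : max_seq (x :: s) = maxn x (max_seq s). Proof. by []. Qed.

Lemma max_seq_mem s : s != [::] -> max_seq s \in s.
Proof.
elim: s => [//|x s IH] _; rewrite max_seq_cons inE.
have [->|/IH ms] := eqVneq s [::]; first by rewrite maxn0 eqxx.
by rewrite /maxn; case: ifP => _; rewrite ?ms ?orbT ?eqxx.
Qed.

Lemma card_tuples_max_le n p x :
  \sum_(s <- tuples n p) ((max_seq s <= x)%N%:R : R) <= x.+1%:R ^+ p.
Proof.
elim: p => [|p IH]; first by rewrite big_tuples0 expr0.
rewrite big_tuplesS exprS.
under eq_bigr do under eq_bigr do rewrite max_seq_cons geq_max -mulnb natrM.
under eq_bigr do rewrite -big_distrr /=.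
apply: le_trans (ler_sum _ (fun y _ => ler_wpM2l (ler0n _ _) IH)) _.
by rewrite -big_distrl /= ler_wpM2r ?exprn_ge0 //; exact: (sum_ltn_le n x.+1).
Qed.

(* Splitting according to whether the first entry is the maximum, each tuple
   with maximum [m] is charged to [m] once per possible position of [m]. *)
Lemma sum_tuples_max_le n p (h : nat -> R) : (forall m, 0 <= h m) ->
  \sum_(s <- tuples n p.+1) h (max_seq s) <=
  p.+1%:R * \sum_(0 <= m < n) h m * m.+1%:R ^+ p.
Proof.
elim: p h => [|p IH] h h0.
  rewrite big_tuplesS mul1r; under eq_bigr do rewrite big_tuples0 /= maxn0.
  by under [leRHS]eq_bigr do rewrite expr0 mulr1.
have split_max x s : h (max_seq (x :: s)) <=
    h x * (max_seq s <= x)%N%:R + h (max_seq s) * (x < max_seq s)%N%:R.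
  by rewrite max_seq_cons /maxn; case: ltnP => /=; rewrite ?mulr0 ?mulr1 ?add0r ?addr0.
rewrite big_tuplesS.
apply: le_trans (ler_sum _ (fun x _ => ler_sum _ (fun s _ => split_max x s))) _.
under eq_bigr do rewrite big_split /=.
rewrite big_split /=.
have first_max : \sum_(0 <= x < n) \sum_(s <- tuples n p.+1)
      h x * (max_seq s <= x)%N%:R <= \sum_(0 <= m < n) h m * m.+1%:R ^+ p.+1.
  apply: ler_sum => x _; rewrite -big_distrr /=.
  by apply: ler_wpM2l; [exact: h0 | exact: (card_tuples_max_le n p.+1 x)].
have later_max : \sum_(0 <= x < n) \sum_(s <- tuples n p.+1)
      h (max_seq s) * (x < max_seq s)%N%:R <=
    p.+1%:R * \sum_(0 <= m < n) h m * m.+1%:R ^+ p.+1.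
  rewrite exchange_big /=; under eq_bigr do rewrite -big_distrr /=.
  apply: le_trans (ler_sum _ (fun s _ => ler_wpM2l (h0 _) (sum_ltn_le n (max_seq s)))) _.
  apply: le_trans (IH (fun m => h m * m%:R) _) _ => [m|]; first by rewrite mulr_ge0.
  rewrite ler_wpM2l //; apply: ler_sum => m _.
  by rewrite exprS -mulrA ler_wpM2l // ler_wpM2r ?exprn_ge0 // ler_nat.
apply: le_trans (lerD first_max later_max) _.
by rewrite -[p.+2]addn1 natrD mulrDl mul1r addrC.
Qed.

End tuple_sums.

Section ffun_tuples.
Variables (p n : nat).

Definition seq_of_ffun (i : {ffun 'I_p -> 'I_n}) : seq nat :=
  [seq (i k : nat) | k <- enum 'I_p].

Lemma size_seq_of_ffun i : size (seq_of_ffun i) = p.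
Proof. by rewrite size_map size_enum_ord. Qed.

Lemma nth_seq_of_ffun i (k : 'I_p) : nth 0%N (seq_of_ffun i) k = i k.
Proof. by rewrite (nth_map k) ?size_enum_ord // nth_ord_enum. Qed.

Lemma seq_of_ffun_inj : injective seq_of_ffun.
Proof.
move=> i i' eq_ii'; apply/ffunP => k; apply/val_inj => /=.
by rewrite -!nth_seq_of_ffun eq_ii'.
Qed.

Lemma perm_seq_of_ffun_tuples :
  perm_eq [seq seq_of_ffun i | i <- enum {ffun 'I_p -> 'I_n}] (tuples n p).
Proof.
apply: uniq_perm.
- by rewrite map_inj_uniq ?enum_uniq //; exact: seq_of_ffun_inj.
- exact: uniq_tuples.
move=> s; rewrite mem_tuples; apply/mapP/idP.
  move=> [i _ ->]; rewrite size_seq_of_ffun eqxx /=.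
  by apply/allP => x /mapP[k _ ->].
move=> /andP[/eqP sp /allP sn].
have lt_n (k : 'I_p) : (nth 0%N s k < n)%N by apply/sn/mem_nth; rewrite sp.
exists [ffun k => Ordinal (lt_n k)]; first by rewrite mem_enum.
apply: (@eq_from_nth _ 0%N); first by rewrite size_seq_of_ffun sp.
move=> k; rewrite sp => kp.
by rewrite (nth_seq_of_ffun _ (Ordinal kp)) ffunE.
Qed.

Lemma big_ffun_tuples {R : numDomainType} (F : seq nat -> R) :
  \sum_(i : {ffun 'I_p -> 'I_n}) F (seq_of_ffun i) = \sum_(s <- tuples n p) F s.
Proof. by rewrite -(perm_big _ perm_seq_of_ffun_tuples) big_map big_enum. Qed.

Lemma sum_lt_seq_of_ffun (i : {ffun 'I_p -> 'I_n}) j :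
  (\sum_(k < p | (k < j)%N) (i k : nat))%N = sumn (take j (seq_of_ffun i)).
Proof.
have sumn_take (s : seq nat) :
    sumn (take j s) = (\sum_(0 <= k < size s | k < j) nth 0 s k)%N.
  elim: s j => [|x s IH] [|j] /=; [by rewrite big_geq.. | by rewrite big_pred0 |].
  by rewrite big_ltn_cond //= big_add1 /= IH.
rewrite sumn_take size_seq_of_ffun big_mkord.
by apply: eq_bigr => k _; rewrite nth_seq_of_ffun.
Qed.

End ffun_tuples.

Section growth_bound.
Context {R : numDomainType}.
Variables (n : nat) (L N : R).
Hypotheses (L0 : 0 <= L) (N0 : 0 <= N).

Definition growth_term (i : nat) : R := n%:R ^+ i.-1 * L ^+ i * N ^+ i.

Definition growth_bound (q : nat) : R := \sum_(1 <= i < (uphalf q).+1) growth_term i.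

Lemma growth_term_ge0 i : 0 <= growth_term i.
Proof. by rewrite /growth_term !mulr_ge0 // exprn_ge0. Qed.

Lemma growth_bound_ge0 q : 0 <= growth_bound q.
Proof. by apply: sumr_ge0 => i _; exact: growth_term_ge0. Qed.

Lemma growth_term_le_bound k q : (1 <= k <= uphalf q)%N ->
  growth_term k <= growth_bound q.
Proof.
move=> /andP[k1 kq]; rewrite /growth_bound (big_cat_nat _ (n := k)) ?leqW //=.
rewrite [X in _ + X]big_ltn // addrCA lerDl.
by rewrite addr_ge0 // sumr_ge0 // => i _; exact: growth_term_ge0.
Qed.

Lemma growth_bound_ge q : (0 < q)%N -> L * N <= growth_bound q.
Proof.
move=> q0; have : growth_term 1 <= growth_bound q.
  by apply: growth_term_le_bound; rewrite /= uphalf_gt0.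
by rewrite /growth_term expr0 mul1r !expr1.
Qed.

(* The terms multiply like [n t_i t_j = t_(i+j)], and
   [uphalf a + uphalf b <= uphalf (a + b + 1)]. *)
Lemma growth_boundM a b :
  n%:R * growth_bound a * growth_bound b <= ((a + b).+1 ^ 2)%:R * growth_bound (a + b).+1.
Proof.
have termM i j : (1 <= i <= uphalf a)%N -> (1 <= j <= uphalf b)%N ->
    n%:R * growth_term i * growth_term j <= growth_bound (a + b).+1.
  case: i => // i /andP[_ ia]; case: j => // j /andP[_ jb].
  have -> : n%:R * growth_term i.+1 * growth_term j.+1 = growth_term (i.+1 + j.+1).
    by rewrite /growth_term addSn addnS /= !exprS !exprD; ring.
  apply: growth_term_le_bound; rewrite addn_gt0 /=.
  by move: ia jb; rewrite !uphalfE -!divn2; lia.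
set G := growth_bound (a + b).+1 in termM *.
rewrite /growth_bound [n%:R * _]mulr_sumr big_distrlr /=.
apply: (@le_trans _ _ (\sum_(1 <= i < (uphalf a).+1) \sum_(1 <= j < (uphalf b).+1) G)).
  apply: ler_sum_nat => i /andP[i1 ia]; apply: ler_sum_nat => j /andP[j1 jb].
  by apply: termM; apply/andP; split => //; rewrite -ltnS.
rewrite !sumr_const_nat -mulrnA -[leLHS]mulr_natl.
apply: ler_wpM2r; first exact: growth_bound_ge0.
by rewrite ler_nat !subn1 /= expnS expn1 mulnC leq_mul //; rewrite !uphalfE -!divn2; lia.
Qed.

End growth_bound.

Section growth_recursion.
Context {R : numDomainType}.
Variable A : nat -> R.
Hypothesis A0 : forall q, 0 <= A q.

Fixpoint growth_const (q : nat) : R :=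
  if q is q'.+1 then growth_const q' + A q' + q%:R ^+ 3 * growth_const q' ^+ 2 else 0.

Lemma growth_const_ge0 q : 0 <= growth_const q.
Proof.
by elim: q => //= q IH; rewrite !addr_ge0 // mulr_ge0 // exprn_ge0.
Qed.

Lemma growth_const_homo : {homo growth_const : q q' / (q <= q')%N >-> q <= q'}.
Proof.
apply: homo_leq => [//|y x z|q]; first exact: le_trans.
by rewrite /= -addrA lerDl addr_ge0 // mulr_ge0 // exprn_ge0 // growth_const_ge0.
Qed.

Lemma growth_recursion (n : nat) (L N : R) (I : nat -> R) p :
  0 <= L -> 0 <= N -> (forall q, 0 <= I q) -> I 0%N = 0 ->
  (forall q, (q < p)%N ->
     I q.+1 <= A q * (L * N) + \sum_(k < q.+1) n%:R * I k * I (q - k)%N) ->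
  I p <= growth_const p * growth_bound n L N p.
Proof.
move=> L0 N0 I0 I00 Irec; elim/ltn_ind: p Irec => -[_ _|q IH Irec].
  by rewrite I00 mul0r.
set K := growth_const q; set B := growth_bound n L N.
have Bge0 k : 0 <= B k by exact: growth_bound_ge0.
have Ik k : (k <= q)%N -> I k <= K * B k.
  move=> kq; apply: le_trans (IH k _ _) _; first by rewrite ltnS.
    by move=> k' k'k; apply: Irec; lia.
  by rewrite ler_wpM2r // growth_const_homo.
apply: le_trans (Irec q _) _ => //.
have conv : \sum_(k < q.+1) n%:R * I k * I (q - k)%N <= q.+1%:R ^+ 3 * K ^+ 2 * B q.+1.
  apply: le_trans (_ : _ <= \sum_(k < q.+1) K ^+ 2 * (q.+1%:R ^+ 2 * B q.+1)) _.
    apply: ler_sum => -[k /= kq] _; rewrite ltnS in kq.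
    have -> : q.+1%:R ^+ 2 * B q.+1 = ((k + (q - k)).+1 ^ 2)%:R * B (k + (q - k)).+1.
      by rewrite subnKC // natrX.
    apply: le_trans (_ : _ <= K ^+ 2 * (n%:R * B k * B (q - k)%N)) _; last first.
      by rewrite ler_wpM2l ?exprn_ge0 ?growth_const_ge0 // growth_boundM.
    have -> : K ^+ 2 * (n%:R * B k * B (q - k)%N) =
        n%:R * (K * B k) * (K * B (q - k)%N) by ring.
    apply: ler_pM; rewrite ?mulr_ge0 ?I0 //; last exact/Ik/leq_subr.
    by apply: ler_wpM2l => //; exact: Ik.
  rewrite sumr_const card_ord -mulr_natl le_eqVlt; apply/orP; left; apply/eqP.
  ring.
have LNB : L * N <= B q.+1 by exact: growth_bound_ge.
rewrite /= -/K; apply: le_trans (lerD (ler_wpM2l (A0 q) LNB) conv) _.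
by rewrite !mulrDl lerD2r lerDr mulr_ge0 ?growth_const_ge0.
Qed.

End growth_recursion.

Definition gap_pos (s : seq nat) (j : nat) : nat := sumn (take j s).

Lemma psum_nth (s : seq nat) : psum (nth 0%N s) =1 gap_pos s.
Proof.
rewrite /psum /gap_pos => j; elim: j => [|j IH]; first by rewrite big_ord0 take0.
rewrite big_ord_recr /= IH; case: (ltnP j (size s)) => js.
  by rewrite (take_nth 0%N js) sumn_rcons.
by rewrite !take_oversize ?(leq_trans js) // nth_default // addn0.
Qed.

Lemma gap_posD s q j : gap_pos s (j + q) = (gap_pos (drop q s) j + gap_pos s q)%N.
Proof. by rewrite /gap_pos addnC takeD sumn_cat addnC. Qed.

Section gap_expectations.
Context {dT : measure_display} {T : measurableType dT} {R : realType}.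
Variables (P : probability T R) (d : nat) (X : nat -> T -> d.-tuple R).
Hypotheses (hX : is_process X) (hS : stationary P X).
Variable f : d.-tuple R -> R.
Hypotheses (mf : measurable_fun setT f) (f1 : forall y, `|f y| <= 1).

Lemma eq_prodX (u u' : nat -> nat) a b : {in [pred j | a <= j < b]%N, u =1 u'} ->
  prodX f X u a b = prodX f X u' a b.
Proof.
by move=> uu'; apply/funext => w; apply: eq_big_nat => j jab; rewrite uu'.
Qed.

Lemma prodX_cat u a q b : (a <= q <= b)%N ->
  prodX f X u a b = (fun w => prodX f X u a q w * prodX f X u q b w).
Proof.
by move=> /andP[aq qb]; apply/funext => w; rewrite /prodX (big_cat_nat _ (n := q)).
Qed.

(* [Egap s] is the summand of [I_n(p)] with gaps [s]; [Igap n p] below sums it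
   over all of [[0, n)^p], dropping the constraint [i_p^* <= n - 1]. *)
Definition Egap (s : seq nat) : R := `|Ex P (prodX f X (gap_pos s) 0 (size s).+1)|.

Lemma Egap_ge0 s : 0 <= Egap s. Proof. exact: normr_ge0. Qed.

Lemma prodX_take s q : (q <= size s)%N ->
  prodX f X (gap_pos s) 0 q.+1 = prodX f X (gap_pos (take q s)) 0 (size (take q s)).+1.
Proof.
move=> qs; rewrite size_takel //; apply: eq_prodX => j /andP[_ jq].
by rewrite /gap_pos take_takel.
Qed.

(* By stationarity the tail of the product can be shifted back to time 0. *)
Lemma Ex_prodX_drop s q : (q < size s)%N ->
  Ex P (prodX f X (gap_pos s) q.+1 (size s).+1) =
  Ex P (prodX f X (gap_pos (drop q.+1 s)) 0 (size (drop q.+1 s)).+1).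
Proof.
move=> qs; rewrite size_drop subnSK // /prodX.
under eq_fun do rewrite -{1}(add0n q.+1) big_addn subSS.
under eq_fun do under eq_big_nat => j _ do rewrite gap_posD.
exact: (Ex_prod_shift hX hS mf f1 _ (gap_pos (drop q.+1 s)) (gap_pos s q.+1)).
Qed.

(* [|E(AB)| <= |Cov(A, B)| + |E A| |E B|], cutting after the gap [s_q]. *)
Lemma Egap_split (c : R) s q : (q < size s)%N ->
  `|Cov P (prodX f X (gap_pos s) 0 q.+1) (prodX f X (gap_pos s) q.+1 (size s).+1)| <= c ->
  Egap s <= c + Egap (take q s) * Egap (drop q.+1 s).
Proof.
move=> qs cov_le; rewrite /Egap (prodX_cat _ (q := q.+1)) ?ltnS ?(ltnW qs) //.
rewrite -prodX_take ?(ltnW qs) // -Ex_prodX_drop // -normrM.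
set A := prodX _ _ _ 0 _; set B := prodX _ _ _ q.+1 _.
have covE := CovE P (bounded_measurable_prodX hX (gap_pos s) 0 q.+1 mf f1)
  (bounded_measurable_prodX hX (gap_pos s) q.+1 (size s).+1 mf f1).
have -> : Ex P (fun w => A w * B w) = Cov P A B + Ex P A * Ex P B.
  by rewrite covE subrK.
by rewrite (le_trans (ler_normD _ _)) // lerD.
Qed.

Definition Igap (n q : nat) : R := \sum_(s <- tuples n q) Egap s.

Lemma Igap_ge0 n q : 0 <= Igap n q.
Proof. by apply: sumr_ge0 => s _; exact: Egap_ge0. Qed.

Lemma Igap0 n : Igap n 0 = `|Ex P (f \o X 0%N)|.
Proof.
rewrite /Igap big_tuples0 /Egap; congr `|Ex P _|.
by apply/funext => w; rewrite /prodX big_nat1.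
Qed.

Lemma sum_Egap_split n p q : (q <= p)%N ->
  \sum_(s <- tuples n p.+1) Egap (take q s) * Egap (drop q.+1 s) =
  n%:R * Igap n q * Igap n (p - q).
Proof.
move=> qp; have -> : p.+1 = (q + (1 + (p - q)))%N by rewrite add1n addnS subnKC.
under eq_bigr do rewrite -add1n -drop_drop.
rewrite (big_tuples_cat n q (1 + (p - q)) Egap (fun t => Egap (drop 1 t))).
have tail : \sum_(v <- tuples n (1 + (p - q))) Egap (drop 1 v) = n%:R * Igap n (p - q).
  have := big_tuples_cat n 1 (p - q) (fun _ => 1) Egap.
  rewrite (big_tuplesS n 0) big_tuples0 sumr_const_nat subn0 => <-.
  by apply: eq_bigr => v _ /=; rewrite mul1r.
by rewrite tail -/(Igap n q) mulrCA mulrA.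
Qed.

Lemma Igap_le_split n p (phi : nat -> R) :
  (forall s q, size s = p.+1 -> (q <= p)%N ->
     Egap s <= phi (nth 0%N s q) + Egap (take q s) * Egap (drop q.+1 s)) ->
  Igap n p.+1 <= \sum_(s <- tuples n p.+1) phi (max_seq s) +
                 \sum_(q < p.+1) n%:R * Igap n q * Igap n (p - q).
Proof.
move=> Egap_le; have cut_at_max s : s \in tuples n p.+1 ->
    Egap s <= phi (max_seq s) + \sum_(q < p.+1) Egap (take q s) * Egap (drop q.+1 s).
  rewrite mem_tuples => /andP[/eqP sp _].
  have qp : (index (max_seq s) s < p.+1)%N.
    by rewrite -sp index_mem max_seq_mem // -size_eq0 sp.
  apply: le_trans (Egap_le s _ sp qp) _; rewrite nth_index; last first.
    by rewrite max_seq_mem // -size_eq0 sp.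
  rewrite lerD2l (bigD1 (Ordinal qp)) //= lerDl.
  by apply: sumr_ge0 => i _; rewrite mulr_ge0 // Egap_ge0.
rewrite /Igap big_seq; apply: le_trans (ler_sum _ cut_at_max) _.
rewrite -big_seq big_split /= lerD2l exchange_big /=.
by apply: ler_sum => q _; rewrite sum_Egap_split // -ltnS ltn_ord.
Qed.

Lemma Igap_rec (c : R) (theta : nat -> R) n p :
  0 <= c -> (forall m, 0 <= theta m) ->
  (forall (i : nat -> nat) q, (1 <= q <= p.+1)%N ->
     `|Cov P (prodX f X (psum i) 0 q) (prodX f X (psum i) q p.+2)|
       <= c * theta (i q.-1)) ->
  Igap n p.+1 <= c * (p.+1%:R * \sum_(0 <= m < n) theta m * m.+1%:R ^+ p) +
                 \sum_(q < p.+1) n%:R * Igap n q * Igap n (p - q).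
Proof.
move=> c0 theta0 mixing.
have Egap_le s q : size s = p.+1 -> (q <= p)%N ->
    Egap s <= c * theta (nth 0%N s q) + Egap (take q s) * Egap (drop q.+1 s).
  move=> sp qp; apply: Egap_split; first by rewrite sp.
  have := mixing (nth 0%N s) q.+1; rewrite /= ltnS qp sp => /(_ isT).
  under eq_prodX do rewrite psum_nth.
  by under [X in Cov _ _ X]eq_prodX do rewrite psum_nth.
apply: le_trans (Igap_le_split (phi := fun m => c * theta m) n Egap_le) _.
rewrite lerD2r -mulr_sumr ler_wpM2l //.
exact: sum_tuples_max_le.
Qed.

Lemma In_p_le_Igap n p : In_p P X f n p <= Igap n p.
Proof.
rewrite /In_p /Igap -(big_ffun_tuples p n Egap) big_mkcond /=.
apply: ler_sum => i _; case: ifP => _; last exact: Egap_ge0.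
rewrite /Egap size_seq_of_ffun le_eqVlt; apply/orP; left; apply/eqP.
by congr `|Ex P _|; apply: eq_prodX => j _; rewrite /gap_pos -sum_lt_seq_of_ffun.
Qed.

End gap_expectations.

Lemma summable_moment_bound {R : realType} (Theta : nat -> R) p :
  (forall m, 0 <= Theta m) ->
  (\sum_(0 <= i <oo) ((i%:R ^+ p * Theta i)%:E) < +oo)%E ->
  exists C : R, forall n q, (q <= p)%N ->
    \sum_(0 <= m < n) Theta m * m.+1%:R ^+ q <= C.
Proof.
move=> Theta0 summable; set S := (\sum_(0 <= i <oo) _)%E in summable.
have partial n : \sum_(0 <= m < n) m%:R ^+ p * Theta m <= fine S.
  have S0 : (0 <= S)%E.
    by apply: nneseries_ge0 => i _ _; rewrite lee_fin mulr_ge0 // exprn_ge0.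
  rewrite -lee_fin fineK ?ge0_fin_numE // -sumEFin.
  apply: nneseries_lim_ge => i _ _.
  by rewrite lee_fin mulr_ge0 // exprn_ge0.
exists (2%:R ^+ p * fine S + Theta 0%N) => n q qp.
(* [(m+1)^q <= 2^p m^p] for [m >= 1]; the term [m = 0] is bounded separately. *)
have term m : Theta m * m.+1%:R ^+ q <=
    2%:R ^+ p * (m%:R ^+ p * Theta m) + Theta 0%N * (m < 1)%N%:R.
  case: m => [|m].
    by rewrite expr1n mulr1 lerDr !mulr_ge0 ?exprn_ge0.
  rewrite /= mulr0 addr0 mulrA mulrC ler_wpM2r //.
  apply: le_trans (ler_weXn2l _ qp) _; first by rewrite ler1n.
  rewrite -exprMn lerXn2r ?nnegrE //.
  by rewrite -natrM ler_nat mul2n -addnn -addn1 leq_add2l.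
apply: le_trans (ler_sum _ (fun m _ => term m)) _.
rewrite big_split /= -!mulr_sumr lerD // ?ler_wpM2l ?exprn_ge0 //.
by rewrite -[leRHS]mulr1 ler_wpM2l //; exact: (sum_ltn_le n 1).
Qed.

Theorem lemma6 (dT : measure_display) (T : measurableType dT) (R : realType)
  (P : probability T R) (d : nat) (X : nat -> T -> d.-tuple R)
  (G : set (d.-tuple R -> R)) (normG : (d.-tuple R -> R) -> R)
  (Theta : nat -> R) (r : R) (p : nat) :
  (forall f, G f -> measurable_fun [set: d.-tuple R] f) ->
  (forall f, G f -> 0 <= normG f) ->
  is_process X -> stationary P X ->
  multiple_mixing P X G normG Theta r ->
  (0 < p)%N ->
  (\sum_(0 <= i <oo) ((i%:R ^+ p.-1 * Theta i)%:E) < +oo)%E ->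
  exists Kp : R, forall (n : nat) (f : d.-tuple R -> R),
    (0 < n)%N -> G f -> (forall x, `|f x| <= 1) -> Ex P (f \o X 0%N) = 0 ->
    In_p P X f n p <=
      Kp * \sum_(1 <= i < (uphalf p).+1)
             (n%:R ^+ i.-1 * Lrnorm P r (f \o X 0%N) ^+ i * normG f ^+ i).
Proof.
move=> mG normG0 hX hS [_ Theta0 _ mixing] _ summable.
have [C momentC] := summable_moment_bound Theta0 summable.
have C0 : 0 <= C by have := momentC 0%N 0%N (leq0n _); rewrite big_geq.
have [Kmix hKmix] := choice (fun q => mixing q.+1 isT).
pose A q := Num.max (Kmix q) 0 * (q.+1%:R * C).
exists (growth_const A p) => n f _ Gf f1 Ef0.
set L := Lrnorm P r (f \o X 0%N); set N := normG f.
have L0 : 0 <= L by rewrite fine_ge0 // Lnorm_ge0.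
have N0 : 0 <= N by exact: normG0.
apply: le_trans (In_p_le_Igap P X f n p) _.
apply: (growth_recursion (A := A)) => // [q|q||q qp].
- by rewrite /A !mulr_ge0 ?le_max ?lexx ?orbT.
- exact: Igap_ge0.
- by rewrite Igap0 Ef0 normr0.
set c := Num.max (Kmix q) 0; have c0 : 0 <= c by rewrite le_max lexx orbT.
apply: le_trans (Igap_rec hX hS (mG f Gf) f1 (c := c * (L * N)) n _ Theta0 _) _.
- by rewrite !mulr_ge0.
- move=> i q' q'q; apply: le_trans (hKmix q f Gf f1 Ef0 i q' q'q) _.
  rewrite -/L -/N -!mulrA; apply: ler_wpM2r; first by rewrite !mulr_ge0.
  by rewrite /c le_max lexx.
- rewrite lerD2r /A -[leLHS]mulrA [leRHS]mulrAC -[leRHS]mulrA.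
  do 3 (apply: ler_wpM2l; first by rewrite ?mulr_ge0).
  by apply: momentC; lia.
Qed.
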